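(* Let $f,g:(0,\infty)\to\mathbb{R}$ be convex functions with $f(1)=g(1)=0$. (i) If $f(0)=\infty$ and $\liminf_{t\to0}\frac{g(t)}{f(t)}=\beta_0$, then for every $\beta>\beta_0$, \[ \sup_{P,Q}\bigl(\beta\, D_f(P,Q)-D_g(P,Q)\bigr)=\infty, \] the supremum being over all pairs of probability distributions $P,Q$ (on a common space). (ii) If $f^{\ast}(0)=\infty$ and $\liminf_{t\to\infty}\frac{g(t)}{f(t)}=\beta_0$, then for every $\beta>\beta_0$, $\sup_{P,Q}\bigl(\beta\, D_f(P,Q)-D_g(P,Q)\bigr)=\infty$.
   Context: For a convex function $f:(0,\infty)\to\mathbb{R}$ with $f(1)=0$, set $f(0)=\lim_{t\to0}f(t)$, $f^{\ast}(t)=tf(t^{-1})$ and $f^{\ast}(0)=\lim_{t\to\infty}f(t)/t$ (values in $(-\infty,\infty]$). If $P,Q$ are probability measures absolutely continuous with respect to a measure $\mu$ with densities $p=dP/d\mu$, $q=dQ/d\mu$, the $f$-divergence is $D_f(P,Q)=\int_{\{q>0\}} f(p/q)\,dQ+f^{\ast}(0)\,P(q=0)$. *)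

From HB Require Import structures.
From mathcomp Require Import all_boot all_order all_algebra.
From mathcomp Require Import all_classical all_reals all_analysis.
Set Implicit Arguments. Unset Strict Implicit. Unset Printing Implicit Defensive.
Import Order.TTheory GRing.Theory Num.Theory.
Import numFieldNormedType.Exports.
Local Open Scope classical_set_scope.
Local Open Scope ring_scope.
Local Open Scope ereal_scope.

Section fdiv.
Variable R : realType.

Definition convex_pos (f : R -> R) : Prop :=
  convex_function (E := R^o) [set x : R^o | (0 < x)%R] f.

Definition f_at0 (f : R -> R) : \bar R := lim ((f t)%:E @[t --> 0%R^'+]).

Definition fstar_at0 (f : R -> R) : \bar R :=
  lim ((f t / t)%:E @[t --> +oo%R]).

Definition fext (f : R -> R) (t : R) : \bar R :=
  if (0 < t)%R then (f t)%:E else f_at0 f.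

Definition is_density d (T : measurableType d) (mu : {measure set T -> \bar R})
  (p : T -> R) : Prop :=
  measurable_fun setT p /\ (forall x, (0 <= p x)%R) /\
  \int[mu]_x (p x)%:E = 1.

Definition fdiv (f : R -> R) d (T : measurableType d)
  (mu : {measure set T -> \bar R}) (p q : T -> R) : \bar R :=
  \int[mu]_(x in [set x | (0 < q x)%R]) (fext f (p x / q x) * (q x)%:E)
  + fstar_at0 f * \int[mu]_(x in [set x | q x = 0%R]) (p x)%:E.

Definition beta_diff_values (f g : R -> R) (beta : R) : set (\bar R) :=
  [set v | exists (d : measure_display) (T : measurableType d)
      (mu : {measure set T -> \bar R}) (p q : T -> R),
      is_density mu p /\ is_density mu q /\
      v = beta%:E * fdiv f mu p q - fdiv g mu p q].

End fdiv.

From HB Require Import structures.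
From mathcomp Require Import all_boot all_order all_algebra.
From mathcomp Require Import all_classical all_reals all_analysis.
From mathcomp Require Import ring lra.
Import Order.TTheory GRing.Theory Num.Theory.
Import numFieldNormedType.Exports.
Local Open Scope classical_set_scope.
Local Open Scope ring_scope.
Local Open Scope ereal_scope.

(* Three-atom pairs suffice. If Q puts mass a on an atom where dP/dQ = t, mass
   b on an atom where dP/dQ = s, and the rest on an atom where dP/dQ = 1, then
   beta D_f(P,Q) - D_g(P,Q) = a (beta f t - g t) + b (beta f s - g s).
   In case (i) take a = 1/2 and let t -> 0; in case (ii) take a = 1/(2t) and
   let t -> oo, s being fixed and b <= 1. Picking b' strictly between the
   liminf and beta, there are such t with g t < b' f t, so the first term is at
   least (beta - b') a f t, which is unbounded because f(0) = oo, resp.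
   f^*(0) = oo; the second term stays above -|beta f s - g s|. *)

Section finitely_supported.
Context {R : realType}.

Definition counting_lt (n : nat) : {measure set nat -> \bar R} :=
  msum (fun i => @dirac _ nat i R) n.

Lemma integral_counting_lt n (D : set nat) (h : nat -> R) :
  \int[counting_lt n]_(x in D) (h x)%:E =
  (\sum_(i < n) (nat_of_ord i \in D)%:R * h i)%R%:E.
Proof.
rewrite integralE !ge0_integral_measure_sum //.
under eq_bigr do rewrite integral_dirac // diracE funeposE -EFin_max -EFinM.
under [X in _ - X]eq_bigr do
  rewrite integral_dirac // diracE funenegE -EFinN -EFin_max -EFinM.
rewrite !sumEFin -EFinB -sumrB; congr EFin; apply: eq_bigr => i _.
rewrite -mulrBr; congr (_ * _)%R.
have [h0|h0] := leP 0%R (h i).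
  by rewrite (max_idPr _) ?subr0 // oppr_le0.
by rewrite (max_idPl _) ?sub0r ?opprK // oppr_ge0 ltW.
Qed.

Definition seq_fun (s : seq R) (i : nat) : R := nth 0%R s i.

Lemma is_density_seq_fun (s : seq R) :
  all (fun x => 0 <= x)%R s -> (\sum_(x <- s) x = 1)%R ->
  is_density (counting_lt (size s)) (seq_fun s).
Proof.
move=> /(all_nthP 0%R) s_ge0 s1; split; first by move=> ? ? ?.
split.
  move=> i; rewrite /seq_fun.
  by have [/s_ge0 //|i_ge] := ltnP i (size s); rewrite nth_default.
rewrite integral_counting_lt; congr EFin; rewrite -[RHS]s1 (big_nth 0%R) big_mkord.
by apply: eq_bigr => i _; rewrite mem_set ?mul1r.
Qed.

Lemma fdiv_seq_fun (f : R -> R) (sp sq : seq R) :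
  size sp = size sq -> all (fun x => 0 < x)%R sp -> all (fun x => 0 < x)%R sq ->
  fdiv f (counting_lt (size sq)) (seq_fun sp) (seq_fun sq) =
  (\sum_(i < size sq) f (seq_fun sp i / seq_fun sq i) * seq_fun sq i)%R%:E.
Proof.
move=> eq_size /(all_nthP 0%R) sp_gt0 /(all_nthP 0%R) sq_gt0.
have in_range i : (0 < seq_fun sq i)%R -> (i < size sq)%N.
  by rewrite /seq_fun ltnNge; apply: contraTN => /(nth_default 0%R) ->; rewrite ltxx.
rewrite /fdiv (eq_integral
    (fun i => (f (seq_fun sp i / seq_fun sq i) * seq_fun sq i)%R%:E)).
  rewrite !integral_counting_lt.
  have -> : (\sum_(i < size sq)
      (nat_of_ord i \in [set x | seq_fun sq x = 0%R])%:R * seq_fun sp i = 0)%R.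
    apply: big1 => i _; rewrite memNset ?mul0r //= => /eqP.
    by rewrite gt_eqF // sq_gt0.
  rewrite mule0 adde0; congr EFin; apply: eq_bigr => i _.
  by rewrite mem_set ?mul1r //= sq_gt0.
move=> i /[!inE] /= /in_range i_lt.
by rewrite /fext divr_gt0 // ?sq_gt0 // sp_gt0 // eq_size.
Qed.

End finitely_supported.

Section ereal_facts.
Context {R : realType}.

(* [lim] returns a default point other than [+oo] on a non-convergent filter. *)
Lemma lim_pinfty_cvg (F : set_system (\bar R)) : lim F = +oo -> F --> +oo.
Proof.
rewrite /lim /lim_in; case: xgetP => [x -> Fx <- //|_ /eqP].
by rewrite /point.
Qed.

Lemma limf_einf_lt_witness {T : choiceType} {X : filteredType T}
    {h : X -> \bar R} {F : set_system X} {b : \bar R} {V : set X} :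
  limf_einf h F < b -> F V -> exists2 x, V x & h x < b.
Proof.
rewrite limf_einfE => hF_lt FV.
have : ereal_inf (h @` V) < b.
  by apply: le_lt_trans hF_lt; apply: ereal_sup_ubound; exists V.
by move=> /ereal_inf_lt [y [x Vx <-] hx]; exists x.
Qed.

Lemma exists_real_between (x : \bar R) (y : R) :
  x < y%:E -> exists2 b : R, x < b%:E & (b < y)%R.
Proof.
case: x => [r| |] //=.
- by rewrite lte_fin => ry; exists ((r + y) / 2)%R; rewrite ?lte_fin; lra.
- by move=> _; exists (y - 1)%R; rewrite ?ltNye //; lra.
Qed.

Lemma Nnorm_le_mul (a x : R) : (0 <= a)%R -> (a <= 1)%R -> (- `|x| <= a * x)%R.
Proof.
move=> a_ge0 a_le1.
have x_ge : (- `|x| <= x)%R by exact: lerNnormlW.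
have := normr_ge0 x; nra.
Qed.

End ereal_facts.

Section beta_diff.
Local Open Scope ring_scope.
Context {R : realType} {f g : R -> R} {beta : R}.
Hypotheses (f1 : f 1 = 0) (g1 : g 1 = 0).

Lemma three_point_beta_diff (r s a b : R) :
  0 < r -> 0 < s -> 0 < a -> 0 < b -> a + b < 1 -> r * a + s * b = a + b ->
  beta_diff_values f g beta
    ((a * (beta * f r - g r) + b * (beta * f s - g s))%:E).
Proof.
move=> r0 s0 a0 b0 ab1 mass.
(* the third atom, of likelihood ratio 1, contributes f 1 = g 1 = 0 *)
pose c := 1 - a - b; pose p := [:: r * a; s * b; c]; pose q := [:: a; b; c].
have c0 : 0 < c by rewrite /c; lra.
have p_gt0 : all (fun x => 0 < x) p by rewrite /= !mulr_gt0 // c0.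
have q_gt0 : all (fun x => 0 < x) q by rewrite /= a0 b0 c0.
have fdiv_three (h : R -> R) : h 1 = 0 ->
    fdiv h (counting_lt (size q)) (seq_fun p) (seq_fun q) = (a * h r + b * h s)%:E.
  move=> h1; rewrite fdiv_seq_fun // !big_ord_recl big_ord0 /seq_fun /=.
  by rewrite !mulfK ?divff ?gt_eqF // h1; congr EFin; ring.
have is_density_three l : all (fun x => 0 < x) l -> \sum_(x <- l) x = 1 ->
    is_density (counting_lt (size l)) (seq_fun l).
  by move=> /(sub_all (fun x => @ltW _ _ 0 x)); exact: is_density_seq_fun.
exists default_measure_display, nat, (counting_lt 3), (seq_fun p), (seq_fun q).
split; [|split].
- by apply: is_density_three; rewrite // !big_cons big_nil /c; lra.
- by apply: is_density_three; rewrite // !big_cons big_nil /c; lra.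
- by rewrite !fdiv_three // -EFinM -EFinB; congr EFin; ring.
Qed.

Lemma ereal_sup_pinfty_of_limf_einf (F : set_system R) {FF : Filter F}
    (S : set (\bar R)) (w : R -> R) (b c : R) :
  b < beta -> (limf_einf (fun t => (g t / f t)%:E) F < b%:E)%E ->
  (forall K, \forall t \near F, K <= w t * f t) ->
  (\forall t \near F, 0 < w t /\
     exists2 v, S v & ((w t * (beta * f t - g t) - c)%:E <= v)%E) ->
  ereal_sup S = +oo%E.
Proof.
move=> b_lt liminf_lt wf_large value_near; apply: eq_infty => M.
have [t [[wf_ge wf_ge1] [w_gt0 [v Sv v_ge]]]] :=
  limf_einf_lt_witness liminf_lt
    (filterI (filterI (wf_large ((M + c) / (beta - b))) (wf_large 1)) value_near).
rewrite lte_fin => gf_lt.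
have f_gt0 : 0 < f t by rewrite -(pmulr_rgt0 _ w_gt0) (lt_le_trans ltr01).
rewrite ltr_pdivrMr // in gf_lt.
rewrite ler_pdivrMr ?subr_gt0 // in wf_ge.
have wg_lt : w t * g t < w t * (b * f t) by rewrite ltr_pM2l.
apply: (le_trans _ (ereal_sup_ubound Sv)); apply: (le_trans _ v_ge).
rewrite lee_fin; nra.
Qed.

Lemma beta_diff_sup_pinfty_at0 (b : R) :
  b < beta -> f_at0 f = +oo%E ->
  (limf_einf (fun t => (g t / f t)%:E) 0^'+ < b%:E)%E ->
  ereal_sup (beta_diff_values f g beta) = +oo%E.
Proof.
move=> b_lt /lim_pinfty_cvg/cvgeyPge f_large liminf_lt.
apply: (@ereal_sup_pinfty_of_limf_einf _ _ _ (fun=> 2^-1) _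
  `|beta * f 2 - g 2| b_lt liminf_lt).
  by move=> K; apply: filterS (f_large (2 * K)) => t; rewrite lee_fin; lra.
apply: filterS (filterI (nbhs_right_gt 0) (nbhs_right_lt ltr01)) => t [t_gt0 t_lt1].
split; first by rewrite invr_gt0.
exists ((2^-1 * (beta * f t - g t) + (1 - t) / 2 * (beta * f 2 - g 2))%:E).
  by apply: three_point_beta_diff; lra.
have : - `|beta * f 2 - g 2| <= (1 - t) / 2 * (beta * f 2 - g 2).
  by apply: Nnorm_le_mul; lra.
by rewrite lee_fin; lra.
Qed.

Lemma beta_diff_sup_pinfty_at_pinfty (b : R) :
  b < beta -> fstar_at0 f = +oo%E ->
  (limf_einf (fun t => (g t / f t)%:E) +oo%R < b%:E)%E ->
  ereal_sup (beta_diff_values f g beta) = +oo%E.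
Proof.
move=> b_lt /lim_pinfty_cvg/cvgeyPge f_large liminf_lt.
apply: (@ereal_sup_pinfty_of_limf_einf _ _ _ (fun t => t^-1 / 2) _
  `|beta * f 2^-1 - g 2^-1| b_lt liminf_lt).
  by move=> K; apply: filterS (f_large (2 * K)) => t; rewrite lee_fin; lra.
apply: filterS (nbhs_pinfty_gt (num_real 1)) => t t_gt1.
have u_gt0 : 0 < t^-1 by rewrite invr_gt0; lra.
have u_lt1 : t^-1 < 1 by rewrite invf_lt1; lra.
have tu : t * t^-1 = 1 by rewrite divff // gt_eqF //; lra.
split; first lra.
exists ((t^-1 / 2 * (beta * f t - g t)
  + (1 - t^-1) * (beta * f 2^-1 - g 2^-1))%:E).
  by apply: three_point_beta_diff; lra.
have : - `|beta * f 2^-1 - g 2^-1| <= (1 - t^-1) * (beta * f 2^-1 - g 2^-1).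
  by apply: Nnorm_le_mul; lra.
by rewrite lee_fin; lra.
Qed.

End beta_diff.

Theorem lemma2 (R : realType) (f g : R -> R)
  (hf : convex_pos f) (hg : convex_pos g) (f1 : f 1%R = 0%R) (g1 : g 1%R = 0%R) :
  (forall beta0 : \bar R,
     f_at0 f = +oo ->
     limf_einf (fun t => (g t / f t)%:E) (0%R^'+) = beta0 ->
     forall beta : R, beta0 < beta%:E ->
       ereal_sup (beta_diff_values f g beta) = +oo)
  /\
  (forall beta0 : \bar R,
     fstar_at0 f = +oo ->
     limf_einf (fun t => (g t / f t)%:E) (+oo%R) = beta0 ->
     forall beta : R, beta0 < beta%:E ->
       ereal_sup (beta_diff_values f g beta) = +oo).
Proof.
split=> beta0 f_infty liminf_eq beta /exists_real_between[b]; rewrite -liminf_eq.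
- move=> liminf_lt b_lt.
  exact: (beta_diff_sup_pinfty_at0 f1 g1 _ b_lt f_infty liminf_lt).
- move=> liminf_lt b_lt.
  exact: (beta_diff_sup_pinfty_at_pinfty f1 g1 _ b_lt f_infty liminf_lt).
Qed.
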